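(* Let $\tau=[0;\overline{b_1,b_2,\dots,b_s}]$ be a quadratic power series whose shortest periodic part is $b_1,\dots,b_s$. Let $f=[a_0;a_1,a_2,\dots]\in\widehat K\setminus(K\cup\Theta_\tau)$. For a positive integer $r$ with $a_r\ne b_s$, set $\alpha_r=[a_0;a_1,\dots,a_r,\overline{b_1,\dots,b_{s-1},b_s}]$, and write $\rho_r=\frac{|f-\alpha_r|}{|\alpha_r-\alpha_r^\sigma|}$. (i) If $a_{r+1}\ne b_1$, then $-\log_q\rho_r=\deg a_r+\deg b_s-\deg(a_r-b_s)+\deg a_{r+1}+\deg b_1-\deg(a_{r+1}-b_1).$ (ii) If $a_{r+1}=b_1$, let $t$ be the largest integer such that the word $a_{r+1}\cdots a_{r+t}$ coincides with the prefix of length $t$ of the infinite word $(b_1\cdots b_s)^\infty$; let $s_0\in\{1,\dots,s\}$ be such that $a_{r+t}=b_{s_0}$ is the $t$-th letter of this infinite word (i.e. $s_0\equiv t \bmod s$), and put $s'=s_0+1$ if $s_0<s$ and $s'=1$ otherwise. Then $-\log_q\rho_r=2\sum_{j=1}^t\deg a_{r+j}+\deg a_r+\deg b_s-\deg(a_r-b_s)+\deg a_{r+t+1}+\deg b_{s'}-\deg(a_{r+t+1}-b_{s'}).$ In particular, in both cases $\rho_r\le q^{-2}$. Furthermore, putting $t=0$ and $s'=1$ when $a_{r+1}\ne b_1$: if $\deg a_r\ne\deg b_s$ and $\deg a_{r+t+1}\ne\deg b_{s'}$, then $-\log_q\rho_r=2\sum_{j=1}^t\deg a_{r+j}+\min\{\deg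 a_r,\deg b_s\}+\min\{\deg a_{r+t+1},\deg b_{s'}\}.$
   Context: $q$ is a positive power of a prime, $R=\mathbb F_q[Y]$, $K=\mathbb F_q(Y)$, $\widehat K=\mathbb F_q((Y^{-1}))$ with absolute value $|P/Q|=q^{\deg P-\deg Q}$ extended to $\widehat K$ (the paper writes $\mathrm v(x)=-\log x/\log q$ for the corresponding valuation). $[a_0;a_1,a_2,\dots]$ denotes the continued fraction $a_0+1/(a_1+1/(a_2+\cdots))$ with $a_0\in R$ and $a_i$ ($i\ge1$) nonconstant polynomials; an overline indicates a block repeated infinitely often. For a quadratic power series $\gamma$, $\gamma^\sigma$ is its Galois conjugate over $K$, and $\Theta_\gamma=\mathrm{PGL}_2(R)\cdot\{\gamma,\gamma^\sigma\}$ under the action by homographies on $\widehat K\cup\{\infty\}$. *)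

(* The completion  Khat = F_q((Y^-1))  is built concretely as
   the type of coefficient functions  int -> F  (x n = coefficient of Y^n),
   elements of Khat being those with support bounded above. *)
From mathcomp Require Import all_boot all_order all_algebra.
From Stdlib Require Import ClassicalEpsilon.
Set Implicit Arguments.
Unset Strict Implicit.
Unset Printing Implicit Defensive.
Import Order.TTheory GRing.Theory Num.Theory.
Local Open Scope ring_scope.

Section LaurentSeries.
Variable F : fieldType.

Definition LS := int -> F.

Definition ls_bounded (x : LS) : Prop := exists N : int, forall n : int, N < n -> x n = 0.

Definition ls_top (x : LS) : int :=
  epsilon (inhabits 0) (fun N : int => forall n : int, N < n -> x n = 0).

(* degree of a nonzero element: |x| = q ^ ls_deg x, i.e. v(x) = - ls_deg x *)
Definition ls_deg (x : LS) : int :=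
  epsilon (inhabits 0) (fun d : int => x d != 0 /\ forall m : int, d < m -> x m = 0).

Definition ls_zero : LS := fun _ => 0.
Definition ls_add (x y : LS) : LS := fun n => x n + y n.
Definition ls_opp (x : LS) : LS := fun n => - x n.
Definition ls_sub (x y : LS) : LS := fun n => x n - y n.

(* Cauchy product: all nonzero terms x i * y j, i + j = n, have
   n - top y <= i <= top x *)
Definition ls_mul (x y : LS) : LS := fun n =>
  \sum_(k < `|(ls_top x + ls_top y - n)%R|%N.+1)
     x (ls_top x - k%:Z) * y (n - ls_top x + k%:Z).

Definition ls_poly (p : {poly F}) : LS := fun n => if 0 <= n then p`_`|n|%N else 0.

(* coefficients w_0, ..., w_k of the inverse of the unit power series
   sum_k u k T^k *)
Fixpoint inv_coefs (u : nat -> F) (k : nat) : seq F :=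
  match k with
  | 0 => [:: (u 0%N)^-1]
  | k'.+1 => let s := inv_coefs u k' in
             rcons s (- (u 0%N)^-1 * \sum_(i < k'.+1) u i.+1 * nth 0 s (k' - i))
  end.

(* multiplicative inverse (ls_inv 0 = 0) *)
Definition ls_inv (x : LS) : LS :=
  let d := ls_deg x in
  let u := fun k : nat => x (d - k%:Z) in
  fun n => if n <= - d then nth 0 (inv_coefs u `|(- d - n)%R|%N) `|(- d - n)%R|%N else 0.

Definition ls_in_K (x : LS) : Prop :=
  exists P Q : {poly F}, Q != 0 /\ ls_mul x (ls_poly Q) = ls_poly P.

Fixpoint cf_fin (l : seq {poly F}) : LS :=
  match l with
  | [::] => ls_zero
  | a :: l' => if l' is [::] then ls_poly a else ls_add (ls_poly a) (ls_inv (cf_fin l'))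
  end.

Definition cf_conv (c : nat -> {poly F}) (n : nat) : LS := cf_fin (mkseq c n.+1).

Definition is_cf (c : nat -> {poly F}) (x : LS) : Prop :=
  (forall i : nat, (0 < i)%N -> (1 < size (c i))%N) /\
  forall M : int, exists N : nat, forall n : nat, (N <= n)%N ->
    forall m : int, M <= m -> ls_sub x (cf_conv c n) m = 0.

Definition galois_conj (alpha beta : LS) : Prop :=
  ls_bounded beta /\ ~ ls_in_K alpha /\
  exists A B C : {poly F}, A != 0 /\
    ls_add (ls_add (ls_mul (ls_poly A) (ls_mul alpha alpha)) (ls_mul (ls_poly B) alpha))
           (ls_poly C) = ls_zero /\
    ls_add (ls_mul (ls_poly A) (ls_add alpha beta)) (ls_poly B) = ls_zero.

(* x = (A g + B) / (C g + D) with [A B; C D] in GL_2(R), the image not being oo *)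
Definition homography_image (A B C D : {poly F}) (g x : LS) : Prop :=
  size (A * D - B * C) = 1%N /\
  ls_add (ls_mul (ls_poly C) g) (ls_poly D) <> ls_zero /\
  x = ls_mul (ls_add (ls_mul (ls_poly A) g) (ls_poly B))
             (ls_inv (ls_add (ls_mul (ls_poly C) g) (ls_poly D))).

Definition in_Theta (gamma x : LS) : Prop :=
  exists g : LS, (g = gamma \/ galois_conj gamma g) /\
    exists A B C D : {poly F}, homography_image A B C D g x.

Definition pdeg (p : {poly F}) : int := ((size p).-1)%:Z.

(* letters of the word b = b_1 ... b_s (b_j = nth 0 b j.-1), and the j-th
   letter (j >= 1) of the infinite word (b_1 ... b_s)^oo *)
Definition bl (b : seq {poly F}) (j : nat) : {poly F} := nth 0 b j.-1.
Definition bper (b : seq {poly F}) (j : nat) : {poly F} := nth 0 b ((j.-1) %% size b).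

Definition tau_word (b : seq {poly F}) (i : nat) : {poly F} :=
  if i == 0%N then 0 else bper b i.

Definition alpha_word (a : nat -> {poly F}) (b : seq {poly F}) (r i : nat) : {poly F} :=
  if (i <= r)%N then a i else bper b (i - r).

Definition sprime (s t : nat) : nat :=
  let s0 := (((t.-1) %% s).+1)%N in if (s0 < s)%N then s0.+1 else 1%N.

End LaurentSeries.

(* If two continued fractions agree up to index k and
   differ at k+1, peeling off the common partial quotients (each d contributes
   |d|^-2, since |1/X - 1/Y| = |X - Y| / (|X| |Y|)) gives
     deg (x - y) = deg (c_(k+1) - d_(k+1)) - deg c_(k+1) - deg d_(k+1)
                   - 2 (deg c_1 + ... + deg c_k).
   Applied to f and alpha_r with k = r + t this yields |f - alpha_r|; t is finite
   because alpha_r lies in Theta_tau and f does not.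
   Write alpha_r = [a_0; ..., a_r, beta] with beta = [b_1; b_2, ...].  Both beta
   and -1/[b_s; b_(s-1), ...] are fixed points of the period homography; since
   beta is irrational, every quadratic over R vanishing at alpha_r also vanishes
   at [a_0; ..., a_r, -1/[b_s; ...]] = [a_0; ..., a_(r-1), a_r - [b_s; ...]],
   which is therefore alpha_r^sigma, and the same formula gives
   |alpha_r - alpha_r^sigma|.  Finally deg p + deg q - deg (p - q) is at least
   min (deg p, deg q) >= 1, with equality when deg p <> deg q. *)

From HB Require Import structures.
From mathcomp Require Import all_boot all_order all_algebra.
From mathcomp Require Import zify ring.
From mathcomp Require Import boolp.
From Stdlib Require Import ClassicalEpsilon ProofIrrelevance.
Set Implicit Arguments.
Unset Strict Implicit.
Unset Printing Implicit Defensive.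
Import Order.TTheory GRing.Theory Num.Theory.
Local Open Scope ring_scope.

Section CauchyProduct.
Variable F : fieldType.
Implicit Types u v w : nat -> F.

Definition cauchy u v (k : nat) : F := \sum_(i < k.+1) u i * v (k - i)%N.

Let trunc u k : {poly F} := \poly_(i < k.+1) u i.

Let coef_trunc u k j : (j <= k)%N -> (trunc u k)`_j = u j.
Proof. by move=> hj; rewrite coef_poly ltnS hj. Qed.

Let coef_truncM u v k j : (j <= k)%N -> (trunc u k * trunc v k)`_j = cauchy u v j.
Proof.
move=> hj; rewrite coefM; apply: eq_bigr => i _.
have hi : (i <= k)%N by rewrite (leq_trans _ hj) // -ltnS.
by rewrite !coef_trunc // (leq_trans (leq_subr _ _) hj).
Qed.

Let coefM_low (p p' q : {poly F}) k :
  (forall j, (j <= k)%N -> p`_j = p'`_j) -> (p * q)`_k = (p' * q)`_k.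
Proof. by move=> h; rewrite !coefM; apply: eq_bigr => i _; rewrite h // -ltnS. Qed.

Lemma eq_cauchy u u' v v' : u =1 u' -> v =1 v' -> cauchy u v =1 cauchy u' v'.
Proof. by move=> hu hv k; apply: eq_bigr => i _; rewrite hu hv. Qed.

Lemma cauchyC u v k : cauchy u v k = cauchy v u k.
Proof. by rewrite -!(coef_truncM _ _ (leqnn k)) mulrC. Qed.

Lemma cauchyA u v w k : cauchy (cauchy u v) w k = cauchy u (cauchy v w) k.
Proof.
have low_uv : (trunc (cauchy u v) k * trunc w k)`_k = (trunc u k * trunc v k * trunc w k)`_k.
  by apply: coefM_low => j hj; rewrite coef_trunc // coef_truncM.
have low_vw : (trunc u k * trunc (cauchy v w) k)`_k = (trunc u k * (trunc v k * trunc w k))`_k.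
  by rewrite ![trunc u k * _]mulrC; apply: coefM_low => j hj; rewrite coef_trunc // coef_truncM.
by rewrite -!(coef_truncM _ _ (leqnn k)) low_uv low_vw mulrA.
Qed.

Lemma cauchyDl u u' v k :
  cauchy (fun j => u j + u' j) v k = cauchy u v k + cauchy u' v k.
Proof. by rewrite /cauchy -big_split; apply: eq_bigr => i _; rewrite mulrDl. Qed.

Lemma cauchy_constl c v k : cauchy (fun j => if j == 0%N then c else 0) v k = c * v k.
Proof. by rewrite /cauchy big_ord_recl subn0 big1 ?addr0 // => i _; rewrite mul0r. Qed.

Lemma cauchy_shiftl u v k : u 0%N = 0 -> cauchy u v k.+1 = cauchy (fun j => u j.+1) v k.
Proof. by move=> u0; rewrite /cauchy big_ord_recl u0 mul0r add0r. Qed.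

Lemma cauchy0l u v : u 0%N = 0 -> cauchy u v 0 = 0.
Proof. by move=> u0; rewrite /cauchy big_ord_recl big_ord0 u0 mul0r addr0. Qed.

Definition inv_coef u j := nth 0 (inv_coefs u j) j.

Lemma size_inv_coefs u k : size (inv_coefs u k) = k.+1.
Proof. by elim: k => //= k IH; rewrite size_rcons IH. Qed.

Lemma nth_inv_coefs u k j : (j <= k)%N -> nth 0 (inv_coefs u k) j = inv_coef u j.
Proof.
elim: k => [|k IH]; first by rewrite leqn0 => /eqP ->.
rewrite leq_eqVlt => /orP [/eqP -> //|]; rewrite ltnS => hj.
by rewrite /= nth_rcons size_inv_coefs ltnS hj IH.
Qed.

Lemma inv_coefS u k :
  inv_coef u k.+1 = - (u 0%N)^-1 * \sum_(i < k.+1) u i.+1 * inv_coef u (k - i)%N.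
Proof.
rewrite /inv_coef /= nth_rcons size_inv_coefs ltnn eqxx; congr (_ * _).
by apply: eq_bigr => i _; rewrite nth_inv_coefs // leq_subr.
Qed.

Lemma cauchy_inv_coef u k : u 0%N != 0 ->
  cauchy u (inv_coef u) k = if k == 0%N then 1 else 0.
Proof.
case: k => [|k] u0; first by rewrite /cauchy big_ord_recl big_ord0 addr0 /= mulfV.
rewrite /cauchy big_ord_recl /= subn0 inv_coefS.
under eq_bigr => i _ do rewrite subSS.
by rewrite mulrA mulrN mulfV // mulN1r addNr.
Qed.

Lemma inv_coef0 k : inv_coef (fun=> 0) k = 0.
Proof.
elim/ltn_ind: k => [[|k]] _; first by rewrite /inv_coef /= invr0.
by rewrite inv_coefS invr0 oppr0 mul0r.
Qed.

End CauchyProduct.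

Section LaurentProduct.
Variable F : fieldType.
Implicit Types x y : LS F.

Definition ls_deg_le x (N : int) := forall n : int, N < n -> x n = 0.

Lemma ls_deg_leW x N N' : N <= N' -> ls_deg_le x N -> ls_deg_le x N'.
Proof. by move=> hN h n hn; apply: h; apply: le_lt_trans hn. Qed.

Lemma ls_deg_le_bounded x N : ls_deg_le x N -> ls_bounded x.
Proof. by move=> h; exists N. Qed.

Lemma ls_deg_le_top x : ls_bounded x -> ls_deg_le x (ls_top x).
Proof. exact: epsilon_spec. Qed.

Definition ls_coefs x (N : int) (k : nat) : F := x (N - k%:Z).

(* ls_mul with its epsilon-chosen bounds ls_top replaced by any bounds Nx, Ny of
   the supports; by ls_mulE the result does not depend on the choice *)
Definition ls_mul_from x y (Nx Ny : int) (n : int) : F :=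
  if n <= Nx + Ny then cauchy (ls_coefs x Nx) (ls_coefs y Ny) `|(Nx + Ny - n)%R|%N else 0.

Lemma ls_mul_fromC x y Nx Ny n : ls_mul_from x y Nx Ny n = ls_mul_from y x Ny Nx n.
Proof. by rewrite /ls_mul_from addrC cauchyC. Qed.

Lemma ls_mul_from_raise x y Nx Ny (k : nat) n : ls_deg_le x Nx ->
  ls_mul_from x y (Nx + k%:Z) Ny n = ls_mul_from x y Nx Ny n.
Proof.
move=> hx; elim: k => [|k IH]; first by rewrite addr0.
rewrite -{}IH /ls_mul_from.
have hk0 : ls_coefs x (Nx + k.+1%:Z) 0 = 0 by rewrite /ls_coefs hx //; lia.
case: (ltrgtP n (Nx + k%:Z + Ny + 1)) => h.
- have -> : n <= Nx + k.+1%:Z + Ny by lia.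
  have -> : n <= Nx + k%:Z + Ny by lia.
  have -> : `|(Nx + k.+1%:Z + Ny - n)%R|%N = (`|(Nx + k%:Z + Ny - n)%R|%N).+1 by lia.
  rewrite cauchy_shiftl //; apply: eq_cauchy => // j.
  by rewrite /ls_coefs; congr x; lia.
- by have [-> ->] : (n <= Nx + k.+1%:Z + Ny) = false /\ (n <= Nx + k%:Z + Ny) = false
    by split; lia.
- have -> : n <= Nx + k.+1%:Z + Ny by lia.
  have -> : (n <= Nx + k%:Z + Ny) = false by lia.
  have -> : `|(Nx + k.+1%:Z + Ny - n)%R|%N = 0%N by lia.
  exact: cauchy0l.
Qed.

Lemma ls_mul_from_indep x y Nx Nx' Ny n : ls_deg_le x Nx -> ls_deg_le x Nx' ->
  ls_mul_from x y Nx Ny n = ls_mul_from x y Nx' Ny n.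
Proof.
wlog le : Nx Nx' / Nx <= Nx' => [W h h'|h _].
  by case: (lerP Nx Nx') => [|/ltW] hN; [exact: W | symmetry; exact: W].
have -> : Nx' = Nx + (`|(Nx' - Nx)%R|%N)%:Z by lia.
by rewrite ls_mul_from_raise.
Qed.

Lemma ls_mulE x y Nx Ny : ls_deg_le x Nx -> ls_deg_le y Ny ->
  ls_mul x y =1 ls_mul_from x y Nx Ny.
Proof.
move=> hx hy n; have tx := ls_deg_le_top (ls_deg_le_bounded hx).
have ty := ls_deg_le_top (ls_deg_le_bounded hy).
rewrite (ls_mul_from_indep _ _ _ hx tx) ls_mul_fromC (ls_mul_from_indep _ _ _ hy ty).
rewrite ls_mul_fromC /ls_mul /ls_mul_from /cauchy /ls_coefs; case: ifP => hn.
  by apply: eq_bigr => i _; have := ltn_ord i; rewrite ltnS => hi; congr (_ * y _); lia.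
by rewrite big1 // => i _; rewrite ty ?mulr0 //; move/negbT: hn; lia.
Qed.

Lemma ls_deg_leM x y Nx Ny : ls_deg_le x Nx -> ls_deg_le y Ny ->
  ls_deg_le (ls_mul x y) (Nx + Ny).
Proof. by move=> hx hy n hn; rewrite (ls_mulE hx hy) /ls_mul_from leNgt hn. Qed.

Lemma ls_coefsM x y Nx Ny : ls_deg_le x Nx -> ls_deg_le y Ny ->
  ls_coefs (ls_mul x y) (Nx + Ny) =1 cauchy (ls_coefs x Nx) (ls_coefs y Ny).
Proof.
move=> hx hy k; rewrite /ls_coefs (ls_mulE hx hy) /ls_mul_from.
have -> : Nx + Ny - k%:Z <= Nx + Ny by lia.
by congr cauchy; lia.
Qed.

Lemma ls_deg_exists x : ls_bounded x -> (exists n, x n != 0) ->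
  exists d, x d != 0 /\ ls_deg_le x d.
Proof.
move=> [N hN] [m0 hm0].
have m0N : m0 <= N by rewrite leNgt; apply/negP => /hN h; rewrite h eqxx in hm0.
pose P k := x (N - k%:Z) != 0.
have exP : exists k, P k.
  by exists `|(N - m0)%R|%N; rewrite /P (_ : N - _ = m0) //; lia.
case: (ex_minnP exP) => k0 Pk0 mink; exists (N - k0%:Z); split => // m hm.
case: (lerP m N) => hmN; last exact: hN.
have : ~~ P `|(N - m)%R|%N by apply/negP => /mink; lia.
by rewrite /P negbK (_ : N - _ = m) //; [move/eqP | lia].
Qed.

Lemma ls_deg_spec x : ls_bounded x -> (exists n, x n != 0) ->
  x (ls_deg x) != 0 /\ ls_deg_le x (ls_deg x).
Proof. by move=> hb hn; exact: (epsilon_spec (inhabits 0) _ (ls_deg_exists hb hn)). Qed.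

Lemma ls_deg_eq x d : x d != 0 -> ls_deg_le x d -> ls_deg x = d.
Proof.
move=> h1 h2; have [h3 h4] := ls_deg_spec (ls_deg_le_bounded h2) (ex_intro _ d h1).
case: (ltrgtP d (ls_deg x)) => // h.
- by move: h3; rewrite h2 // eqxx.
- by move: h1; rewrite h4 // eqxx.
Qed.

Lemma ls_deg_le_inv x : ls_deg_le (ls_inv x) (- ls_deg x).
Proof. by move=> n hn; rewrite /ls_inv leNgt hn. Qed.

Lemma ls_inv0 : ls_inv (ls_zero F) =1 ls_zero F.
Proof. by move=> n; rewrite /ls_inv; case: ifP => // _; rewrite nth_inv_coefs ?inv_coef0. Qed.

Lemma ls_deg_le_poly (p : {poly F}) : ls_deg_le (ls_poly p) (size p).-1%:Z.
Proof.
move=> n hn; rewrite /ls_poly; case: ifP => // _; rewrite nth_default //.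
by move: hn; case: (size p) => [|m] /= hn; lia.
Qed.

Lemma ls_poly1E n : ls_poly 1 n = if n == 0 then (1 : F) else 0.
Proof.
rewrite /ls_poly coefC; case: (boolP (0 <= n)) => h1; case: (boolP (n == 0)) => h2;
  case: (boolP (`|n|%N == 0%N)) => h3 //; lia.
Qed.

Lemma ls_mulV x : ls_bounded x -> (exists n, x n != 0) -> ls_mul x (ls_inv x) =1 ls_poly 1.
Proof.
move=> hb hn0 n; have [hd1 hd2] := ls_deg_spec hb hn0; set d := ls_deg x in hd1 hd2.
rewrite (ls_mulE hd2 (@ls_deg_le_inv x)) /ls_mul_from ls_poly1E addrN.
case: ifP => hn; last by have -> : (n == 0) = false by lia.
rewrite (@eq_cauchy _ _ (ls_coefs x d) _ (inv_coef (ls_coefs x d))) //; last first.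
  move=> j; rewrite /ls_coefs /ls_inv -/d; have -> : - d - j%:Z <= - d by lia.
  by rewrite (_ : `|(- d - (- d - j%:Z))%R|%N = j) ?nth_inv_coefs //; lia.
rewrite cauchy_inv_coef; first by congr (if _ then _ else _); lia.
by rewrite /ls_coefs (_ : d - 0%:Z = d) //; lia.
Qed.

End LaurentProduct.

Section LaurentField.
Variable F : fieldType.

Record khat := Khat { kval : LS F; kval_bounded : ls_bounded kval }.

Lemma khat_ext (x y : khat) : kval x =1 kval y -> x = y.
Proof.
case: x y => [x hx] [y hy] /funext /= exy; subst y.
by rewrite (proof_irrelevance _ hx hy).
Qed.

Lemma kval_inj : injective kval.
Proof. by move=> x y e; apply: khat_ext => n; rewrite e. Qed.

HB.instance Definition _ := gen_eqMixin khat.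
HB.instance Definition _ := gen_choiceMixin khat.

Implicit Types x y : LS F.

Lemma zero_bounded : ls_bounded (ls_zero F).
Proof. by exists 0. Qed.

Lemma add_bounded x y : ls_bounded x -> ls_bounded y -> ls_bounded (ls_add x y).
Proof.
move=> [N1 h1] [N2 h2]; exists (Num.max N1 N2) => n; rewrite gt_max => /andP [n1 n2].
by rewrite /ls_add h1 ?h2 ?addr0.
Qed.

Lemma opp_bounded x : ls_bounded x -> ls_bounded (ls_opp x).
Proof. by move=> [N h]; exists N => n hn; rewrite /ls_opp h // oppr0. Qed.

Lemma mul_bounded x y : ls_bounded x -> ls_bounded y -> ls_bounded (ls_mul x y).
Proof. by move=> [N1 h1] [N2 h2]; exists (N1 + N2); apply: ls_deg_leM. Qed.

Lemma inv_bounded x : ls_bounded (ls_inv x).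
Proof. by exists (- ls_deg x); apply: ls_deg_le_inv. Qed.

Lemma poly_bounded (p : {poly F}) : ls_bounded (ls_poly p).
Proof. by exists (size p).-1%:Z; apply: ls_deg_le_poly. Qed.

Definition kzero := Khat zero_bounded.
Definition kadd (x y : khat) := Khat (add_bounded (kval_bounded x) (kval_bounded y)).
Definition kopp (x : khat) := Khat (opp_bounded (kval_bounded x)).
Definition kmul (x y : khat) := Khat (mul_bounded (kval_bounded x) (kval_bounded y)).
Definition kinv (x : khat) := Khat (inv_bounded (kval x)).
Definition kpoly (p : {poly F}) := Khat (poly_bounded p).

Lemma kaddA : associative kadd.
Proof. by move=> x y z; apply: khat_ext => n /=; rewrite /ls_add addrA. Qed.
Lemma kaddC : commutative kadd.
Proof. by move=> x y; apply: khat_ext => n /=; rewrite /ls_add addrC. Qed.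
Lemma kadd0 : left_id kzero kadd.
Proof. by move=> x; apply: khat_ext => n /=; rewrite /ls_add add0r. Qed.
Lemma kaddN : left_inverse kzero kopp kadd.
Proof. by move=> x; apply: khat_ext => n /=; rewrite /ls_add /ls_opp addNr. Qed.

HB.instance Definition _ := GRing.isZmodule.Build khat kaddA kaddC kadd0 kaddN.

Lemma kmulA : associative kmul.
Proof.
move=> x y z; apply: khat_ext => n /=.
have hx := ls_deg_le_top (kval_bounded x); have hy := ls_deg_le_top (kval_bounded y).
have hz := ls_deg_le_top (kval_bounded z).
rewrite (ls_mulE hx (ls_deg_leM hy hz)) (ls_mulE (ls_deg_leM hx hy) hz) /ls_mul_from addrA.
case: ifP => // _.
by rewrite (eq_cauchy (frefl _) (ls_coefsM hy hz)) (eq_cauchy (ls_coefsM hx hy) (frefl _)) cauchyA.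
Qed.

Lemma kmulC : commutative kmul.
Proof.
move=> x y; apply: khat_ext => n /=.
have hx := ls_deg_le_top (kval_bounded x); have hy := ls_deg_le_top (kval_bounded y).
by rewrite (ls_mulE hx hy) (ls_mulE hy hx) ls_mul_fromC.
Qed.

Lemma ls_deg_le_poly1 : ls_deg_le (ls_poly (1 : {poly F})) 0.
Proof. by move=> m hm; rewrite ls_poly1E; case: eqP => // e; rewrite e ltxx in hm. Qed.

Lemma kmul1 : left_id (kpoly 1) kmul.
Proof.
move=> x; apply: khat_ext => n /=; have hx := ls_deg_le_top (kval_bounded x).
rewrite (ls_mulE ls_deg_le_poly1 hx) /ls_mul_from add0r.
case: ifP => hn; last by rewrite hx //; lia.
set u := ls_coefs (kval x) _.
rewrite (@eq_cauchy _ _ (fun j => if j == 0%N then 1 else 0) _ u) //.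
  by rewrite cauchy_constl mul1r /ls_coefs; congr kval; lia.
by move=> j; rewrite /ls_coefs ls_poly1E; congr (if _ then _ else _); lia.
Qed.

Lemma kmulDl : left_distributive kmul kadd.
Proof.
move=> x y z; apply: khat_ext => n /=.
have hx := ls_deg_le_top (kval_bounded x); have hy := ls_deg_le_top (kval_bounded y).
have hz := ls_deg_le_top (kval_bounded z).
set M := Num.max (ls_top (kval x)) (ls_top (kval y)).
have hx' : ls_deg_le (kval x) M by apply: ls_deg_leW hx; rewrite le_max lexx.
have hy' : ls_deg_le (kval y) M by apply: ls_deg_leW hy; rewrite le_max lexx orbT.
have hxy : ls_deg_le (ls_add (kval x) (kval y)) M by move=> m hm; rewrite /ls_add hx' ?hy' ?addr0.
rewrite /ls_add (ls_mulE hxy hz) (ls_mulE hx' hz) (ls_mulE hy' hz) /ls_mul_from.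
by case: ifP => _; rewrite ?addr0 // -cauchyDl.
Qed.

Lemma kpoly1_neq0 : kpoly 1 != kzero.
Proof.
apply/eqP => /(congr1 (fun z : khat => kval z 0)) /=.
by rewrite ls_poly1E eqxx => /eqP; rewrite oner_eq0.
Qed.

HB.instance Definition _ :=
  GRing.Zmodule_isComNzRing.Build khat kmulA kmulC kmul1 kmulDl kpoly1_neq0.

Lemma kval_neq0 (x : khat) : x != 0 -> exists n, kval x n != 0.
Proof.
move=> h; apply: contrapT => hn; move/eqP: h; apply; apply: khat_ext => n /=.
by apply/eqP; apply: contrapT => hxn; apply: hn; exists n; apply/negP.
Qed.

Lemma kmulVf (x : khat) : x != 0 -> kmul (kinv x) x = 1.
Proof.
by move=> hx; rewrite kmulC; apply: khat_ext; exact: ls_mulV (kval_bounded x) (kval_neq0 hx).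
Qed.

Lemma kinv0 : kinv 0 = 0.
Proof. by apply: khat_ext => n /=; rewrite ls_inv0. Qed.

HB.instance Definition _ := GRing.ComNzRing_isField.Build khat kmulVf kinv0.

End LaurentField.

Section Degree.
Variable F : fieldType.
Local Notation K := (khat F).
Implicit Types x y : K.

Lemma kvalD x y n : kval (x + y) n = kval x n + kval y n. Proof. by []. Qed.
Lemma kvalN x n : kval (- x) n = - kval x n. Proof. by []. Qed.
Lemma kvalM x y : kval (x * y) = ls_mul (kval x) (kval y). Proof. by []. Qed.

Definition deg x := ls_deg (kval x).
Definition deg_le x (N : int) := ls_deg_le (kval x) N.

Lemma deg_leW x N N' : N <= N' -> deg_le x N -> deg_le x N'.
Proof. exact: ls_deg_leW. Qed.

Lemma deg_leM x y N1 N2 : deg_le x N1 -> deg_le y N2 -> deg_le (x * y) (N1 + N2).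
Proof. exact: ls_deg_leM. Qed.

Lemma deg_leD x y N : deg_le x N -> deg_le y N -> deg_le (x + y) N.
Proof. by move=> h1 h2 n hn; rewrite kvalD h1 ?h2 ?addr0. Qed.

Lemma deg_leN x N : deg_le x N -> deg_le (- x) N.
Proof. by move=> h n hn; rewrite kvalN h ?oppr0. Qed.

Lemma deg_leB x y N : deg_le x N -> deg_le y N -> deg_le (x - y) N.
Proof. by move=> h1 h2; apply: deg_leD => //; apply: deg_leN. Qed.

Lemma deg_spec x : x != 0 -> kval x (deg x) != 0 /\ deg_le x (deg x).
Proof. by move=> h; apply: ls_deg_spec (kval_bounded x) (kval_neq0 h). Qed.

Lemma deg_eq x d : kval x d != 0 -> deg_le x d -> deg x = d.
Proof. exact: ls_deg_eq. Qed.

Lemma neq0_kval x n : kval x n != 0 -> x != 0.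
Proof. by apply: contraNneq => ->. Qed.

Lemma deg_leP x N : x != 0 -> deg_le x N <-> deg x <= N.
Proof.
move=> hx; have [h1 h2] := deg_spec hx; split => [h|]; last by move/deg_leW; apply.
by rewrite leNgt; apply/negP => /h e; rewrite e eqxx in h1.
Qed.

Lemma degM x y : x != 0 -> y != 0 -> deg (x * y) = deg x + deg y.
Proof.
move=> hx hy; have [hx1 hx2] := deg_spec hx; have [hy1 hy2] := deg_spec hy.
apply: deg_eq; last exact: deg_leM.
rewrite kvalM (ls_mulE hx2 hy2) /ls_mul_from lexx subrr /= /cauchy big_ord_recl big_ord0.
by rewrite addr0 /ls_coefs !subr0 mulf_neq0.
Qed.

Lemma deg1 : deg (1 : K) = 0.
Proof. by apply: deg_eq; [rewrite /= ls_poly1E eqxx oner_neq0 | exact: ls_deg_le_poly1]. Qed.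

Lemma degV x : x != 0 -> deg x^-1 = - deg x.
Proof.
move=> hx; have := degM hx (invr_neq0 hx); rewrite mulfV // deg1.
by move/eqP; rewrite eq_sym addr_eq0 => /eqP ->; rewrite opprK.
Qed.

Lemma degN x : deg (- x) = deg x.
Proof.
have [->|hx] := eqVneq x 0; first by rewrite oppr0.
have [h1 h2] := deg_spec hx.
by apply: deg_eq; [rewrite kvalN oppr_eq0 | exact: deg_leN].
Qed.

Lemma deg_addr_lt x y : x != 0 -> deg_le y (deg x - 1) -> x + y != 0 /\ deg (x + y) = deg x.
Proof.
move=> hx hy; have [h1 h2] := deg_spec hx.
have e : kval (x + y) (deg x) = kval x (deg x) by rewrite kvalD hy ?addr0 //; lia.
split; first by apply: (@neq0_kval _ (deg x)); rewrite e.
by apply: deg_eq; [rewrite e | apply: deg_leD => //; apply: deg_leW hy; lia].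
Qed.

Lemma deg_leV x N : x != 0 -> N <= deg x -> deg_le x^-1 (- N).
Proof. by move=> hx hN; apply/(deg_leP _ (invr_neq0 hx)); rewrite degV // lerN2. Qed.

End Degree.

Section PolynomialEmbedding.
Variable F : fieldType.
Local Notation K := (khat F).
Implicit Types p q : {poly F}.

Lemma kpolyB : zmod_morphism (@kpoly F).
Proof.
move=> p q; apply: khat_ext => n /=.
by rewrite /ls_add /ls_opp /ls_poly coefB; case: ifP; rewrite ?subr0.
Qed.

HB.instance Definition _ := GRing.isZmodMorphism.Build {poly F} K (@kpoly F) kpolyB.

Lemma kpoly_eq0 p : (kpoly p == 0 :> K) = (p == 0).
Proof.
apply/idP/idP => [/eqP h|/eqP ->]; last by rewrite raddf0.
apply/eqP/polyP => i; rewrite coef0.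
by have := congr1 (fun x : K => kval x i%:Z) h; rewrite /= /ls_poly le0z_nat.
Qed.

Lemma kpolyX_mul (y : K) n : kval (kpoly 'X * y) n = kval y (n - 1).
Proof.
have [Ny hy] := kval_bounded y.
have hX : ls_deg_le (ls_poly ('X : {poly F})) 1.
  by move=> m hm; rewrite /ls_poly coefX; case: ifP => // _; rewrite (_ : (_ == _) = false) //; lia.
rewrite kvalM (ls_mulE hX hy) /ls_mul_from; case: ifP => hn; last by rewrite hy //; lia.
rewrite (@eq_cauchy _ _ (fun j => if j == 0%N then 1 else 0) _ (ls_coefs (kval y) Ny)) //.
  by rewrite cauchy_constl mul1r /ls_coefs; congr kval; lia.
move=> j; rewrite /ls_coefs /ls_poly coefX.
by case: (boolP (0 <= 1 - j%:Z)) => h1; case: (boolP (j == 0%N)) => h2;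
  case: (boolP (`|(1 - j%:Z)%R|%N == 1%N)) => h3 //; lia.
Qed.

Lemma kpolyC_mul c (y : K) n : kval (kpoly c%:P * y) n = c * kval y n.
Proof.
have [Ny hy] := kval_bounded y.
have hC : ls_deg_le (ls_poly c%:P) 0.
  by move=> m hm; rewrite /ls_poly coefC; case: ifP => // _; rewrite (_ : (_ == _) = false) //; lia.
rewrite kvalM (ls_mulE hC hy) /ls_mul_from add0r.
case: ifP => hn; last by rewrite hy ?mulr0 //; lia.
rewrite (@eq_cauchy _ _ (fun j => if j == 0%N then c else 0) _ (ls_coefs (kval y) Ny)) //.
  by rewrite cauchy_constl /ls_coefs; congr (_ * kval _ _); lia.
move=> j; rewrite /ls_coefs /ls_poly coefC.
by case: (boolP (0 <= 0 - j%:Z)) => h1; case: (boolP (j == 0%N)) => h2;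
  case: (boolP (`|(0 - j%:Z)%R|%N == 0%N)) => h3 //; lia.
Qed.

Lemma kpolyM : {morph (@kpoly F) : p q / p * q}.
Proof.
have kpolyXM q : kpoly ('X * q) = kpoly 'X * kpoly q :> K.
  apply: khat_ext => n; rewrite kpolyX_mul /= /ls_poly coefXM.
  case: (boolP (0 <= n)) => h1; case: (boolP (0 <= n - 1)) => h2;
    case: (boolP (`|n|%N == 0%N)) => h3 //; try lia.
  by congr (q`__); lia.
have kpolyCM c q : kpoly (c%:P * q) = kpoly c%:P * kpoly q :> K.
  by apply: khat_ext => n; rewrite kpolyC_mul /= /ls_poly coefCM; case: ifP; rewrite ?mulr0.
elim/poly_ind=> [|p c IH] q; first by rewrite mul0r raddf0 mul0r.
rewrite mulrDl !raddfD /= kpolyCM -mulrA [_ * q]mulrC IH [q * _]mulrC kpolyXM /=.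
by rewrite IH mulrDl mulrA.
Qed.

HB.instance Definition _ := GRing.isMonoidMorphism.Build {poly F} K (@kpoly F) (erefl, kpolyM).

Lemma deg_kpoly p : p != 0 -> deg (kpoly p) = pdeg p.
Proof.
move=> hp; apply: deg_eq; last exact: ls_deg_le_poly.
rewrite /= /ls_poly (_ : 0 <= _) // (_ : `|_|%N = (size p).-1) //.
by rewrite -lead_coefE lead_coef_eq0.
Qed.

Lemma deg_le_kpoly p : deg_le (kpoly p) (pdeg p).
Proof. exact: ls_deg_le_poly. Qed.

End PolynomialEmbedding.

Section FiniteContinuedFractions.
Variable F : fieldType.
Local Notation K := (khat F).
Implicit Types x y X Y Z : K.
Implicit Types c : {poly F}.
Implicit Types l : seq {poly F}.

Fixpoint cfx l X : K := if l is c :: l' then kpoly c + (cfx l' X)^-1 else X.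

Fixpoint cfk l : K :=
  if l is c :: l' then (if l' is [::] then kpoly c else kpoly c + (cfk l')^-1) else 0.

Lemma kval_cfk l : kval (cfk l) = cf_fin l.
Proof.
elim: l => [|c l IH] //=; case: l IH => [|c' l'] IH //=.
by move: IH => /= ->.
Qed.

Lemma cfx_cat l1 l2 X : cfx (l1 ++ l2) X = cfx l1 (cfx l2 X).
Proof. by elim: l1 => //= c l ->. Qed.

Lemma cfx_rev l Z : cfx l (- (cfx (rev l) Z)^-1) = - Z^-1.
Proof.
by elim: l Z => [|c l IH] Z //=; rewrite rev_cons -cats1 cfx_cat /= IH invrN invrK; ring.
Qed.

Definition nonconst l := all (fun c => 1 < size c)%N l.

Lemma pdeg_ge0 c : 0 <= pdeg c.
Proof. by []. Qed.

Lemma pdeg_ge1 c : (1 < size c)%N -> 1 <= pdeg c.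
Proof. by rewrite /pdeg; lia. Qed.

Lemma nonconst_poly_neq0 c : (1 < size c)%N -> c != 0.
Proof. by apply: contraTneq => ->; rewrite size_poly0. Qed.

Lemma deg_le0V X : X != 0 -> 0 <= deg X -> deg_le X^-1 0.
Proof. by move=> hX hX0; apply: deg_leW (deg_leV hX (lexx _)); rewrite oppr_le0. Qed.

Lemma deg_kpoly_addV c X : (1 < size c)%N -> deg_le X^-1 0 ->
  kpoly c + X^-1 != 0 /\ deg (kpoly c + X^-1) = pdeg c.
Proof.
move=> hc hX; have hc0 := nonconst_poly_neq0 hc.
rewrite -(deg_kpoly hc0); apply: deg_addr_lt; first by rewrite kpoly_eq0.
by apply: deg_leW hX; rewrite deg_kpoly // subr_ge0 pdeg_ge1.
Qed.

Lemma cfx_deg c l X : nonconst (c :: l) -> deg_le X^-1 0 ->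
  cfx (c :: l) X != 0 /\ deg (cfx (c :: l) X) = pdeg c.
Proof.
elim: l c => [|c' l IH] c /= /andP [hc hl] hX; first exact: deg_kpoly_addV.
have [h1 h2] := IH c' hl hX; apply: deg_kpoly_addV => //.
by apply: deg_le0V; rewrite ?h2.
Qed.

Lemma cfx_neq0 l X : nonconst l -> X != 0 -> deg_le X^-1 0 -> cfx l X != 0.
Proof. by case: l => [|c l] //= hl _ hX; have [] := cfx_deg hl hX. Qed.

Lemma degBV x y : x != 0 -> y != 0 -> x != y ->
  x^-1 - y^-1 != 0 /\ deg (x^-1 - y^-1) = deg (x - y) - deg x - deg y.
Proof.
move=> hx hy hxy; have hyx : y - x != 0 by rewrite subr_eq0 eq_sym.
have -> : x^-1 - y^-1 = (y - x) * (x^-1 * y^-1) by field; apply/andP.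
have hv : x^-1 * y^-1 != 0 by rewrite mulf_neq0 ?invr_neq0.
split; first by rewrite mulf_neq0.
by rewrite !degM ?invr_neq0 // !degV // -opprB degN addrA.
Qed.

(* Each partial quotient d between the two tails contributes a factor |d|^-2 to
   the distance, by |1/X - 1/Y| = |X - Y| / (|X| |Y|). *)
Lemma deg_cfxB c l X Y : nonconst l -> X != 0 -> Y != 0 -> X != Y ->
  deg_le X^-1 0 -> deg_le Y^-1 0 ->
  cfx (c :: l) X - cfx (c :: l) Y != 0 /\
  deg (cfx (c :: l) X - cfx (c :: l) Y) =
    deg (X - Y) - deg X - deg Y - 2 * \sum_(d <- l) pdeg d.
Proof.
move=> + hX hY hXY hX' hY'; elim: l c => [|c' l IH] c hl /=.
  by rewrite big_nil mulr0 subr0 (_ : _ - _ = X^-1 - Y^-1); [apply: degBV | ring].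
have [hc' hl'] := andP hl; have [IH1 IH2] := IH c' hl'.
have [hU1 hU2] := cfx_deg hl hX'; have [hV1 hV2] := cfx_deg hl hY'.
move: IH1 IH2 hU1 hU2 hV1 hV2 => /=.
set U := kpoly c' + _; set V := kpoly c' + _ => IH1 IH2 hU1 hU2 hV1 hV2.
have hUV : U != V by rewrite -subr_eq0.
rewrite (_ : _ - _ = U^-1 - V^-1); last by ring.
have [h1 h2] := degBV hU1 hV1 hUV; split => //.
by rewrite h2 IH2 hU2 hV2 big_cons; lia.
Qed.

Record hmat := Hmat { h11 : {poly F}; h12 : {poly F}; h21 : {poly F}; h22 : {poly F} }.

Definition hnum M X : K := kpoly (h11 M) * X + kpoly (h12 M).
Definition hden M X : K := kpoly (h21 M) * X + kpoly (h22 M).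

(* the product of the matrices [c 1; 1 0] over the partial quotients c of l *)
Fixpoint cf_hmat l : hmat :=
  if l is c :: l' then
    let M := cf_hmat l' in Hmat (c * h11 M + h21 M) (c * h12 M + h22 M) (h11 M) (h12 M)
  else Hmat 1 0 0 1.

Lemma cf_hmat_det l :
  h11 (cf_hmat l) * h22 (cf_hmat l) - h12 (cf_hmat l) * h21 (cf_hmat l) = (-1) ^+ size l.
Proof.
elim: l => [|c l IH]; first by rewrite /= mulr1 mulr0 subr0.
by rewrite /= exprS -IH; ring.
Qed.

Lemma cfx_hmat l X : X != 0 -> (forall k, (0 < k < size l)%N -> cfx (drop k l) X != 0) ->
  hden (cf_hmat l) X != 0 /\ cfx l X = hnum (cf_hmat l) X / hden (cf_hmat l) X.
Proof.
move=> hX; elim: l => [|c l IH] hk.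
  by rewrite /hnum /hden /= !rmorph0 rmorph1 mul0r add0r mul1r addr0 invr1 mulr1 oner_neq0.
have [hD e] : hden (cf_hmat l) X != 0 /\ cfx l X = hnum (cf_hmat l) X / hden (cf_hmat l) X.
  by apply: IH => k hk1; apply: (hk k.+1) => /=; lia.
have hW : cfx l X != 0.
  by case: l {IH hD e} hk => [|c' l'] hk //; have := hk 1%N; rewrite drop1; apply.
have hN : hnum (cf_hmat l) X != 0 by apply: contraNneq hW => hN; rewrite e hN mul0r.
rewrite /hnum /hden /= in hD hN e *; rewrite e !rmorphD !rmorphM /=.
move: (kpoly c) (kpoly (h11 _)) (kpoly (h12 _)) (kpoly (h21 _)) (kpoly (h22 _)) hN hD.
by move=> c0 m1 m2 m3 m4 hN hD; split => //; field; rewrite hN hD.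
Qed.

Lemma size_cf_hmat21 l : nonconst l -> (size (h21 (cf_hmat l)) < size (h11 (cf_hmat l)))%N.
Proof.
elim: l => [|c l IH] /=; first by rewrite size_poly0 size_poly1.
move=> /andP [hc /IH h]; have h1 : h11 (cf_hmat l) != 0 by rewrite -size_poly_eq0; lia.
have hs : size (c * h11 (cf_hmat l)) = (size c + size (h11 (cf_hmat l))).-1.
  by rewrite size_mul // nonconst_poly_neq0.
rewrite size_polyDl hs; move: hc h; set u := size c; set v := size (h11 _); lia.
Qed.

Lemma cf_hmat21_neq0 l : nonconst l -> l != [::] -> h21 (cf_hmat l) != 0.
Proof.
case: l => [|c l] //= /andP [_ /size_cf_hmat21 h] _.
by rewrite -size_poly_eq0; lia.
Qed.

End FiniteContinuedFractions.

Section InfiniteContinuedFractions.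
Variable F : fieldType.
Local Notation K := (khat F).
Implicit Types x y : K.
Implicit Types c : nat -> {poly F}.
Implicit Types l : seq {poly F}.

Definition cf_nonconst c := forall i, (0 < i)%N -> (1 < size (c i))%N.
Definition cf_shift c k : nat -> {poly F} := fun i => c (k + i)%N.
Definition convergent c n : K := cfk (mkseq c n.+1).
Definition cf_conv_to c x :=
  forall M : int, exists N : nat, forall n, (N <= n)%N -> deg_le (x - convergent c n) M.

Lemma mkseq_cons (T : Type) (f : nat -> T) n : mkseq f n.+1 = f 0%N :: mkseq (fun i => f i.+1) n.
Proof. by rewrite /mkseq /= -[1%N]addn0 iotaDl -map_comp. Qed.

Lemma cf_nonconst_shift c k : cf_nonconst c -> cf_nonconst (cf_shift c k).
Proof. by move=> h i hi; apply: h; rewrite addn_gt0 hi orbT. Qed.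

Lemma nonconst_mkseq_shift c n : cf_nonconst c -> nonconst (mkseq (cf_shift c 1) n).
Proof. by move=> h; apply/allP => _ /mapP [i _ ->]; apply: h. Qed.

Lemma convergentS c n : convergent c n.+1 = kpoly (c 0%N) + (convergent (cf_shift c 1) n)^-1.
Proof. by rewrite /convergent mkseq_cons mkseq_cons. Qed.

Lemma cfk_deg l : l != [::] -> nonconst l -> cfk l != 0 /\ deg (cfk l) = pdeg (head 0 l).
Proof.
elim: l => [|c l IH] // _ /= /andP [hc hl]; case: l IH hl => [|c' l'] IH hl.
  by rewrite kpoly_eq0 deg_kpoly nonconst_poly_neq0.
have [hn hd] := IH isT hl; apply: deg_kpoly_addV => //.
by apply: deg_le0V; rewrite ?hd.
Qed.

Lemma convergent_shift_deg c n : cf_nonconst c ->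
  convergent (cf_shift c 1) n != 0 /\ deg (convergent (cf_shift c 1) n) = pdeg (c 1%N).
Proof.
by move=> h; rewrite /convergent; apply: cfk_deg (nonconst_mkseq_shift _ h); rewrite mkseq_cons.
Qed.

Lemma convergent_shift_deg_leV c n : cf_nonconst c ->
  deg_le (convergent (cf_shift c 1) n)^-1 (-1).
Proof.
move=> h; have [h1 h2] := convergent_shift_deg n h.
by apply: deg_leV h1 _; rewrite h2 pdeg_ge1 // h.
Qed.

Lemma is_cfP c x : is_cf c (kval x) <-> cf_nonconst c /\ cf_conv_to c x.
Proof.
split=> -[hc hconv]; split=> // M.
  have [N hN] := hconv (M + 1); exists N => n hn m hm.
  by have := hN n hn m; rewrite /cf_conv -kval_cfk; apply; lia.
have [N hN] := hconv (M - 1); exists N => n hn m hm.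
by have := hN n hn m; rewrite /cf_conv -kval_cfk; apply; lia.
Qed.

Lemma is_cf_unique c (x y : LS F) : is_cf c x -> is_cf c y -> x =1 y.
Proof.
move=> [_ hx] [_ hy] n; have [N1 h1] := hx n; have [N2 h2] := hy n.
have := h1 (maxn N1 N2) (leq_maxl _ _) n (lexx _).
have := h2 (maxn N1 N2) (leq_maxr _ _) n (lexx _).
by rewrite /ls_sub => /subr0_eq -> /subr0_eq.
Qed.

Lemma is_cf_inj c x y : is_cf c (kval x) -> is_cf c (kval y) -> x = y.
Proof. by move=> hx hy; apply: khat_ext; apply: is_cf_unique hx hy. Qed.

Lemma eq_is_cf c c' (x : LS F) : c =1 c' -> is_cf c x -> is_cf c' x.
Proof. by move=> /funext ->. Qed.

Lemma is_cf_behead c x : is_cf c (kval x) ->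
  let y := (x - kpoly (c 0%N))^-1 in
  [/\ y != 0, deg y = pdeg (c 1%N), is_cf (cf_shift c 1) (kval y) & x = kpoly (c 0%N) + y^-1].
Proof.
move=> /is_cfP [hnc hcv]; set e := pdeg (c 1%N).
have he : 1 <= e by apply: pdeg_ge1; apply: hnc.
have [N0 hN0] := hcv (- e - 1).
have [yn1 yn2] := convergent_shift_deg N0 hnc; rewrite -/e in yn2.
have e1 : x - kpoly (c 0%N) = (convergent (cf_shift c 1) N0)^-1 + (x - convergent c N0.+1).
  by rewrite convergentS; ring.
have [hu1 hu2] : x - kpoly (c 0%N) != 0 /\ deg (x - kpoly (c 0%N)) = - e.
  rewrite e1 -yn2 -degV //; apply: deg_addr_lt; first by rewrite invr_neq0.
  by apply: deg_leW (hN0 _ (leqnSn _)); rewrite degV // yn2; lia.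
set u := x - kpoly (c 0%N) in e1 hu1 hu2 *.
have hdy : deg u^-1 = e by rewrite degV // hu2 opprK.
split; rewrite ?invr_neq0 ?invrK //; last by rewrite /u; ring.
apply/is_cfP; split; first exact: cf_nonconst_shift.
move=> M; have [N hN] := hcv (M - e - e); exists N => n hn.
have [v1 v2] := convergent_shift_deg n hnc; rewrite -/e in v2.
(* the error of the tail is that of x, magnified by |u^-1 * [c_1; ...; c_(n+1)]| = q^(2e) *)
have -> : u^-1 - convergent (cf_shift c 1) n =
          (convergent c n.+1 - x) * u^-1 * convergent (cf_shift c 1) n.
  rewrite convergentS; move: (convergent (cf_shift c 1) n) v1 => w v1.
  rewrite (_ : kpoly (c 0%N) + w^-1 - x = w^-1 - u); last by rewrite /u; ring.
  by field; rewrite ?v1 ?hu1.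
rewrite (_ : M = M - e - e + e + e); last by ring.
apply: deg_leM; last by apply/(deg_leP _ v1); rewrite v2.
apply: deg_leM; last by apply/(deg_leP _ (invr_neq0 hu1)); rewrite hdy.
by rewrite -opprB; apply: deg_leN; apply: hN; lia.
Qed.

Lemma is_cf_drop c x k : is_cf c (kval x) ->
  exists y, [/\ is_cf (cf_shift c k) (kval y), x = cfx (mkseq c k) y &
     (0 < k)%N -> y != 0 /\ deg y = pdeg (c k)].
Proof.
move=> hcf; elim: k => [|k [y [hy1 hy2 _]]].
  by exists x; split => //; apply: eq_is_cf hcf.
have [h1 h2 h3 h4] := is_cf_behead hy1.
exists (y - kpoly (cf_shift c k 0%N))^-1; split.
- by apply: eq_is_cf h3 => i; rewrite /cf_shift addnA addn1.
- by rewrite hy2 mkseqS -cats1 cfx_cat /= {1}h4 /cf_shift addn0.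
- by rewrite h2 /cf_shift addn1.
Qed.

Lemma convergentS_close c n : cf_nonconst c ->
  deg_le (convergent c n.+1 - convergent c n) (- n.+1%:Z).
Proof.
elim: n c => [|n IH] c hc.
  rewrite convergentS /convergent /= addrC addKr.
  have h1 := hc 1%N isT; apply: deg_leV; first by rewrite kpoly_eq0 nonconst_poly_neq0.
  by rewrite deg_kpoly ?pdeg_ge1 ?nonconst_poly_neq0.
rewrite convergentS [convergent c n.+1]convergentS opprD addrACA subrr add0r.
have [u1 u2] := convergent_shift_deg n.+1 hc; have [v1 v2] := convergent_shift_deg n hc.
have [->|hne] := eqVneq (convergent (cf_shift c 1) n.+1) (convergent (cf_shift c 1) n).
  by rewrite subrr.
have [d1 d2] := degBV u1 v1 hne; apply/(deg_leP _ d1); rewrite d2 u2 v2.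
have := (deg_leP _ _).1 (IH _ (cf_nonconst_shift 1 hc)); rewrite subr_eq0 => /(_ hne).
by have := pdeg_ge1 (hc 1%N isT); lia.
Qed.

Lemma convergent_stable c j k (m : int) : cf_nonconst c -> (j <= k)%N -> - j%:Z <= m ->
  kval (convergent c k) m = kval (convergent c j) m.
Proof.
move=> hc hjk hm; elim: k hjk => [|k IH] hjk; first by move: hjk; rewrite leqn0 => /eqP ->.
have [-> //|hne] := eqVneq j k.+1.
rewrite -IH; last by lia.
by apply/subr0_eq; rewrite -kvalN -kvalD (convergentS_close (n:=k) hc) //; lia.
Qed.

Lemma convergent_deg_le c n : cf_nonconst c -> deg_le (convergent c n) (pdeg (c 0%N)).
Proof.
case: n => [|n] hc; first exact: deg_le_kpoly.
rewrite convergentS; apply: deg_leD; first exact: deg_le_kpoly.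
by apply: deg_leW (convergent_shift_deg_leV n hc); rewrite (le_trans _ (pdeg_ge0 _)).
Qed.

(* The limit is read off coefficientwise: the coefficient of Y^m stabilises from
   the |m|-th convergent on. *)
Lemma cf_exists c : cf_nonconst c -> exists x : K, is_cf c (kval x).
Proof.
move=> hc; pose xf (m : int) := kval (convergent c `|m|%N) m.
have hb : ls_bounded xf by exists (pdeg (c 0%N)) => m hm; exact: convergent_deg_le.
exists (Khat hb); apply/is_cfP; split => // M; exists `|M|%N => n hn m hm.
rewrite kvalD kvalN /= /xf; set j := minn `|m|%N n.
rewrite (@convergent_stable c j `|m|%N m hc) ?geq_minl //; last by rewrite /j; lia.
by rewrite (@convergent_stable c j n m hc) ?geq_minr ?subrr //; rewrite /j; lia.
Qed.

End InfiniteContinuedFractions.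

Section DistanceOfContinuedFractions.
Variable F : fieldType.
Local Notation K := (khat F).
Implicit Types x y X Y : K.
Implicit Types c d : nat -> {poly F}.

Lemma deg_cfx_mkseqB c r X Y : (0 < r)%N -> cf_nonconst c ->
  X != 0 -> Y != 0 -> X != Y -> deg_le X^-1 0 -> deg_le Y^-1 0 ->
  cfx (mkseq c r) X - cfx (mkseq c r) Y != 0 /\
  deg (cfx (mkseq c r) X - cfx (mkseq c r) Y) =
    deg (X - Y) - deg X - deg Y - 2 * \sum_(1 <= i < r) pdeg (c i).
Proof.
case: r => // r _ hc hX hY hXY hX' hY'.
rewrite mkseq_cons (_ : \sum_(1 <= i < r.+1) _ = \sum_(d <- mkseq (cf_shift c 1) r) pdeg d).
  exact: deg_cfxB (nonconst_mkseq_shift _ hc) hX hY hXY hX' hY'.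
by rewrite big_map big_add1 /index_iota subn0.
Qed.

Lemma deg_is_cfB c d x y k : is_cf c (kval x) -> is_cf d (kval y) ->
  (forall i, (i <= k)%N -> c i = d i) -> c k.+1 != d k.+1 ->
  x - y != 0 /\ deg (x - y) =
    pdeg (c k.+1 - d k.+1) - pdeg (c k.+1) - pdeg (d k.+1) - 2 * \sum_(1 <= i < k.+1) pdeg (c i).
Proof.
move=> hx hy hcd hne; have [hnc _] := hx; have [hnd _] := hy.
have [X [hX ex hXd]] := is_cf_drop k.+1 hx; have [X0 Xd] := hXd isT.
have [Y [hY ey hYd]] := is_cf_drop k.+1 hy; have [Y0 Yd] := hYd isT.
have := is_cf_behead hX; set X' := (X - _)^-1 => -[X1 X2 _ X3].
have := is_cf_behead hY; set Y' := (Y - _)^-1 => -[Y1 Y2 _ Y3].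
rewrite /cf_shift addn0 addn1 in X2 X3 Y2 Y3.
have hcd0 : c k.+1 - d k.+1 != 0 by rewrite subr_eq0.
have [hXY dXY] : X - Y != 0 /\ deg (X - Y) = pdeg (c k.+1 - d k.+1).
  rewrite -(deg_kpoly hcd0) (_ : X - Y = kpoly (c k.+1 - d k.+1) + (X'^-1 - Y'^-1)); last first.
    by rewrite {1}X3 {1}Y3 rmorphB; ring.
  apply: deg_addr_lt; first by rewrite kpoly_eq0.
  have X'1 : 1 <= deg X' by rewrite X2 pdeg_ge1 ?hnc.
  have Y'1 : 1 <= deg Y' by rewrite Y2 pdeg_ge1 ?hnd.
  rewrite deg_kpoly //; apply: deg_leW (deg_leB (deg_leV X1 X'1) (deg_leV Y1 Y'1)).
  by have := pdeg_ge0 (c k.+1 - d k.+1); lia.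
have XV : deg_le X^-1 0 by apply: deg_le0V; rewrite ?Xd.
have YV : deg_le Y^-1 0 by apply: deg_le0V; rewrite ?Yd.
rewrite ex ey (_ : mkseq d k.+1 = mkseq c k.+1); last first.
  by apply/eq_in_map => i; rewrite mem_iota add0n ltnS => /andP [_ /hcd ->].
have [|d1 d2] := deg_cfx_mkseqB (ltn0Sn k) hnc X0 Y0 _ XV YV.
  by rewrite -subr_eq0.
by rewrite d2 dXY Xd Yd.
Qed.

End DistanceOfContinuedFractions.

Section Quadratics.
Variable F : fieldType.
Local Notation K := (khat F).
Implicit Types x y z X Y : K.
Implicit Types M : hmat F.

Record quad := Quad { qa : {poly F}; qb : {poly F}; qc : {poly F} }.

Definition quad_at Q X : K := kpoly (qa Q) * (X * X) + kpoly (qb Q) * X + kpoly (qc Q).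

Definition fix_quad M := Quad (h21 M) (h22 M - h11 M) (- h12 M).

Lemma fix_quad_root M X : hden M X != 0 -> X = hnum M X / hden M X ->
  quad_at (fix_quad M) X = 0.
Proof.
move=> hD hX; have e : X * hden M X = hnum M X by rewrite {1}hX divfK.
rewrite /quad_at /= rmorphB rmorphN.
transitivity (X * hden M X - hnum M X); first by rewrite /hden /hnum; ring.
by rewrite e subrr.
Qed.

(* the numerator of Q(M Y), i.e. Q(M Y) * hden M Y ^+ 2 as a quadratic in Y *)
Definition quad_pull Q M := Quad
  (qa Q * h11 M ^+ 2 + qb Q * h11 M * h21 M + qc Q * h21 M ^+ 2)
  ((qa Q * h11 M * h12 M + qc Q * h21 M * h22 M) *+ 2 + qb Q * (h11 M * h22 M + h12 M * h21 M))
  (qa Q * h12 M ^+ 2 + qb Q * h12 M * h22 M + qc Q * h22 M ^+ 2).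

Lemma quad_at_hmat Q M Y : hden M Y != 0 ->
  quad_at Q (hnum M Y / hden M Y) = quad_at (quad_pull Q M) Y / hden M Y ^+ 2.
Proof.
rewrite /quad_at /quad_pull /hnum /hden /= !(rmorphD, rmorphM, rmorphMn, rmorphXn) /=.
move: (kpoly (qa Q)) (kpoly (qb Q)) (kpoly (qc Q)) => a b c.
move: (kpoly (h11 M)) (kpoly (h12 M)) (kpoly (h21 M)) (kpoly (h22 M)) => m11 m12 m21 m22 hD.
by field.
Qed.

Lemma in_KP X : ls_in_K (kval X) <-> exists P Q0, Q0 != 0 /\ X * kpoly Q0 = kpoly P.
Proof.
split=> -[P [Q0 [hQ e]]]; exists P, Q0; split => //.
  by apply: kval_inj; rewrite kvalM e.
by change (kval (X * kpoly Q0) = kval (kpoly P)); rewrite e.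
Qed.

Lemma hmat_in_K M X : hden M X != 0 -> ls_in_K (kval X) ->
  ls_in_K (kval (hnum M X / hden M X)).
Proof.
move=> hD /in_KP [P [Q0 [hQ0 e]]]; apply/in_KP.
exists (h11 M * P + h12 M * Q0), (h21 M * P + h22 M * Q0).
have eD : kpoly (h21 M * P + h22 M * Q0) = hden M X * kpoly Q0.
  by rewrite rmorphD !rmorphM /= -e /hden; ring.
split; first by rewrite -kpoly_eq0 eD mulf_neq0 ?kpoly_eq0.
rewrite eD rmorphD !rmorphM /= -e /hnum; move: hD; rewrite /hden => hD.
by field.
Qed.

(* Eliminating X^2 between two quadratics leaves a linear relation over R, which
   must vanish identically when X is irrational. *)
Lemma quad_common_root P Q X X' : qa Q != 0 -> ~ ls_in_K (kval X) ->
  quad_at P X = 0 -> quad_at Q X = 0 -> quad_at Q X' = 0 -> quad_at P X' = 0.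
Proof.
move=> hQa hX hP hQ hQ'.
set w1 := qa Q * qb P - qa P * qb Q; set w0 := qa Q * qc P - qa P * qc Q.
have lin Z : kpoly (qa Q) * quad_at P Z - kpoly (qa P) * quad_at Q Z = kpoly w1 * Z + kpoly w0.
  by rewrite /quad_at /w1 /w0 !(rmorphB, rmorphM) /=; ring.
have hw : kpoly w1 * X + kpoly w0 = 0 by rewrite -lin hP hQ !mulr0 subrr.
have w1_0 : w1 = 0.
  apply: contrapT => /eqP hw1; apply: hX; apply/in_KP; exists (- w0), w1; split => //.
  by rewrite rmorphN /=; apply/eqP; rewrite -subr_eq0 opprK mulrC hw.
have w0_0 : kpoly w0 = 0 by move: hw; rewrite w1_0 rmorph0 mul0r add0r.
have : kpoly (qa Q) * quad_at P X' = 0.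
  by rewrite -[LHS]subr0 -[X in _ - X](mulr0 (kpoly (qa P))) -hQ' lin w1_0 w0_0 rmorph0 mul0r addr0.
by move/eqP; rewrite mulf_eq0 kpoly_eq0 (negbTE hQa) => /eqP.
Qed.

Lemma quad_root_hmat R Q M X X' : qa R != 0 ->
  ~ ls_in_K (kval (hnum M X / hden M X)) -> hden M X != 0 -> hden M X' != 0 ->
  quad_at R X = 0 -> quad_at R X' = 0 ->
  quad_at Q (hnum M X / hden M X) = 0 -> quad_at Q (hnum M X' / hden M X') = 0.
Proof.
move=> hR hirr hD hD' hRX hRX'; rewrite !quad_at_hmat //.
move/eqP; rewrite mulf_eq0 invr_eq0 expf_eq0 (negbTE hD) andbF orbF => /eqP hX.
by rewrite (quad_common_root hR _ hX hRX hRX') ?mul0r // => /(hmat_in_K hD).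
Qed.

Lemma quad_vieta Q x y z : qa Q != 0 -> x != y ->
  quad_at Q x = 0 -> quad_at Q y = 0 -> kpoly (qa Q) * (x + z) + kpoly (qb Q) = 0 -> z = y.
Proof.
move=> hA hxy ex ey ez.
have hv : kpoly (qa Q) * (x + y) + kpoly (qb Q) = 0.
  have : (x - y) * (kpoly (qa Q) * (x + y) + kpoly (qb Q)) = 0.
    by rewrite -[RHS](subrr 0) -{1}ex -ey /quad_at; ring.
  by move/eqP; rewrite mulf_eq0 subr_eq0 (negbTE hxy) => /eqP.
have : kpoly (qa Q) * (z - y) = 0 by rewrite -[RHS](subrr 0) -{1}ez -hv; ring.
by move/eqP; rewrite mulf_eq0 kpoly_eq0 (negbTE hA) subr_eq0 => /eqP.
Qed.

Lemma galois_conj_quad (al als : K) : galois_conj (kval al) (kval als) ->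
  exists Q, [/\ qa Q != 0, ~ ls_in_K (kval al), quad_at Q al = 0 &
                kpoly (qa Q) * (al + als) + kpoly (qb Q) = 0].
Proof.
move=> [_ [hK [A [B [C [hA [e1 e2]]]]]]]; exists (Quad A B C); split => //.
- by apply: khat_ext => n; exact: (congr1 (fun g => g n) e1).
- by apply: khat_ext => n; exact: (congr1 (fun g => g n) e2).
Qed.

Lemma galois_conj_unique (al als al' : K) : galois_conj (kval al) (kval als) -> al' != al ->
  (forall Q, quad_at Q al = 0 -> quad_at Q al' = 0) -> als = al'.
Proof.
move=> /galois_conj_quad [Q [hQ _ hal hconj]] hne hroot.
by apply: (quad_vieta hQ _ hal (hroot Q hal) hconj); rewrite eq_sym.
Qed.

End Quadratics.

Section PeriodicContinuedFractions.
Variable F : fieldType.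
Local Notation K := (khat F).
Implicit Types x X : K.
Implicit Types l : seq {poly F}.

Lemma nonconst_sub l l' : {subset l' <= l} -> nonconst l -> nonconst l'.
Proof. by move=> hs /allP h; apply/allP => x /hs /h. Qed.

Lemma cfx_drop_neq0 l X k : nonconst (behead l) -> X != 0 -> deg_le X^-1 0 -> (0 < k)%N ->
  cfx (drop k l) X != 0.
Proof.
move=> hl hX hXV; case: k => // k _; rewrite (_ : drop k.+1 l = drop k (behead l)).
  by apply: cfx_neq0 hX hXV; apply: nonconst_sub hl => y /mem_drop.
by case: l {hl}.
Qed.

Lemma is_cf_periodic c l x : is_cf c (kval x) ->
  (forall i, c (size l + i)%N = c i) -> mkseq c (size l) = l -> x = cfx l x.
Proof.
move=> hcf hp hm; have [y [h1 h2 _]] := is_cf_drop (size l) hcf.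
by rewrite {1}h2 (is_cf_inj (eq_is_cf hp h1) hcf) hm.
Qed.

Variable b : seq {poly F}.
Hypotheses (hs : (0 < size b)%N) (hb : nonconst b).
Local Notation s := (size b).

Lemma bper_nonconst j : (1 < size (bper b j))%N.
Proof. by apply: (allP hb); rewrite mem_nth // ltn_pmod. Qed.

Lemma bl_nonconst j : (0 < j <= s)%N -> (1 < size (bl b j))%N.
Proof. by case: j => // j /andP [_ hj]; apply: (allP hb); rewrite mem_nth. Qed.

Definition bper_word : nat -> {poly F} := fun i => bper b i.+1.
Definition brev_word : nat -> {poly F} := fun i => nth 0 (rev b) (i %% s).

Lemma bper_word_fix x : is_cf bper_word (kval x) -> x = cfx b x.
Proof.
move=> h; apply: is_cf_periodic h _ _ => [i|]; first by rewrite /bper_word /bper /= modnDl.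
apply: (eq_from_nth (x0 := 0)) => [|i]; rewrite size_mkseq // => hi.
by rewrite nth_mkseq // /bper_word /bper /= modn_small.
Qed.

Lemma brev_word_nonconst : cf_nonconst brev_word.
Proof. by move=> i _; apply: (allP hb); rewrite -mem_rev mem_nth // size_rev ltn_pmod. Qed.

Lemma brev_word_fix x : is_cf brev_word (kval x) -> x = cfx (rev b) x.
Proof.
move=> h; apply: is_cf_periodic h _ _ => [i|]; first by rewrite /brev_word size_rev modnDl.
apply: (eq_from_nth (x0 := 0)) => [|i]; rewrite size_mkseq ?size_rev // => hi.
by rewrite nth_mkseq // /brev_word modn_small.
Qed.

Lemma brev_word0 : brev_word 0 = bl b s.
Proof. by rewrite /brev_word mod0n nth_rev // /bl subn1. Qed.

(* By Galois' theorem on purely periodic continued fractions, the conjugate of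
   [b_1; b_2, ...] is -1/[b_s; b_(s-1), ...]; here we only need that the latter is
   again a fixed point of the period. *)
Lemma cfx_rev_fix bb : bb = cfx (rev b) bb -> bb != 0 -> deg_le bb^-1 0 ->
  - bb^-1 = cfx b (- bb^-1) /\ forall k, cfx (drop k b) (- bb^-1) != 0.
Proof.
move=> hfix hbb hbbV.
have hrev k : cfx (drop k b) (- bb^-1) = - (cfx (rev (take k b)) bb)^-1.
  have e : bb = cfx (rev (drop k b)) (cfx (rev (take k b)) bb).
    by rewrite -cfx_cat -rev_cat cat_take_drop -hfix.
  by rewrite {1}e cfx_rev.
split=> [|k]; first by rewrite -[in RHS](drop0 b) hrev take0.
rewrite hrev oppr_eq0 invr_eq0; apply: cfx_neq0 hbb hbbV.
by apply: nonconst_sub hb => y; rewrite mem_rev => /mem_take.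
Qed.

Lemma period_quad_roots be bb : be = cfx b be -> be != 0 -> deg_le be^-1 0 ->
  bb = cfx (rev b) bb -> bb != 0 -> deg_le bb^-1 0 ->
  quad_at (fix_quad (cf_hmat b)) be = 0 /\ quad_at (fix_quad (cf_hmat b)) (- bb^-1) = 0.
Proof.
move=> hfix hbe0 hbeV hbbfix hbb0 hbbV.
have [hfix' hdrop'] := cfx_rev_fix hbbfix hbb0 hbbV.
have hbe'0 : - bb^-1 != 0 by rewrite oppr_eq0 invr_eq0.
have hbeh : nonconst (behead b) by apply: nonconst_sub hb => y /mem_behead.
have [hD e] := cfx_hmat hbe0 (fun k hk => cfx_drop_neq0 hbeh hbe0 hbeV (andP hk).1).
have [hD' e'] := cfx_hmat hbe'0 (fun k _ => hdrop' k).
by split; [apply: fix_quad_root hD _; rewrite -e | apply: fix_quad_root hD' _; rewrite -e'].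
Qed.

End PeriodicContinuedFractions.

Lemma alpha_word_le (F : fieldType) (a : nat -> {poly F}) b r i :
  (i <= r)%N -> alpha_word a b r i = a i.
Proof. by move=> h; rewrite /alpha_word h. Qed.

Lemma alpha_word_gt (F : fieldType) (a : nat -> {poly F}) b r j :
  alpha_word a b r (r + j.+1) = bper b j.+1.
Proof. by rewrite /alpha_word ifF; [congr bper | apply/negbTE]; lia. Qed.

Section AlphaAndItsConjugate.
Variable F : fieldType.
Local Notation K := (khat F).
Variables (b : seq {poly F}) (a : nat -> {poly F}) (r : nat) (al : K).
Hypotheses (hs : (0 < size b)%N) (hb : nonconst b) (hr : (0 < r)%N) (ha : cf_nonconst a)
  (har : a r != bl b (size b)) (hal : is_cf (alpha_word a b r) (kval al)).
Local Notation s := (size b).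

Lemma alpha_tail : exists be : K,
  [/\ is_cf (bper_word b) (kval be), al = cfx (mkseq a r.+1) be, be != 0 & 1 <= deg be].
Proof.
have [be [h1 h2 h3]] := is_cf_drop r.+1 hal; have [hbe0 hbed] := h3 isT.
exists be; split => //.
- by apply: eq_is_cf h1 => i; rewrite /cf_shift addSnnS alpha_word_gt.
- rewrite h2; congr cfx; apply/eq_in_map => i.
  by rewrite mem_iota add0n ltnS => /andP [_ /alpha_word_le].
- by rewrite hbed -(addn1 r) (@alpha_word_gt _ a b r 0) pdeg_ge1 ?bper_nonconst.
Qed.

Lemma brev_tail : exists bb yb : K,
  [/\ bb = cfx (rev b) bb, bb = kpoly (bl b s) + yb^-1, yb != 0 & 1 <= deg yb].
Proof.
have [bb hbb] := cf_exists (brev_word_nonconst hs hb).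
have := is_cf_behead hbb; set yb := (bb - _)^-1 => -[h1 h2 _ h4].
exists bb, yb; split => //; first exact: brev_word_fix.
- by rewrite -brev_word0.
- by rewrite h2 pdeg_ge1 // brev_word_nonconst.
Qed.

Lemma conj_tail_deg bb yb : bb = kpoly (bl b s) + yb^-1 -> yb != 0 -> 1 <= deg yb ->
  kpoly (a r) - bb != 0 /\ deg (kpoly (a r) - bb) = pdeg (a r - bl b s).
Proof.
move=> ebb hyb hybd; have har0 : a r - bl b s != 0 by rewrite subr_eq0.
rewrite -(deg_kpoly har0) (_ : _ - bb = kpoly (a r - bl b s) + - yb^-1); last first.
  by rewrite ebb rmorphB; ring.
apply: deg_addr_lt; first by rewrite kpoly_eq0.
apply: deg_leN; apply: deg_leW (deg_leV hyb hybd).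
by rewrite deg_kpoly //; have := pdeg_ge0 (a r - bl b s); lia.
Qed.

Lemma deg_alpha_sub_other be bb yb :
  al = cfx (mkseq a r.+1) be -> be != 0 -> 1 <= deg be ->
  bb = kpoly (bl b s) + yb^-1 -> yb != 0 -> 1 <= deg yb ->
  let al' := cfx (mkseq a r) (kpoly (a r) - bb) in
  al - al' != 0 /\ deg (al - al') =
    pdeg (bl b s) - pdeg (a r) - pdeg (a r - bl b s) - 2 * \sum_(1 <= i < r) pdeg (a i).
Proof.
move=> eal hbe hbed ebb hyb hybd al'.
have hbs : (1 < size (bl b s))%N by rewrite bl_nonconst // hs leqnn.
have hbeV : deg_le be^-1 0 by apply: deg_le0V; rewrite // (le_trans _ hbed).
set Z := kpoly (a r) + be^-1; set Z' := kpoly (a r) - bb.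
have [hZ hZd] : Z != 0 /\ deg Z = pdeg (a r) by apply: deg_kpoly_addV; rewrite ?ha.
have hZV : deg_le Z^-1 0 by apply: deg_le0V; rewrite ?hZd.
have [hZ' hZ'd] := conj_tail_deg ebb hyb hybd.
have hZ'V : deg_le Z'^-1 0 by apply: deg_le0V; rewrite ?hZ'd.
have [hZZ hZZd] : Z - Z' != 0 /\ deg (Z - Z') = pdeg (bl b s).
  rewrite (_ : Z - Z' = kpoly (bl b s) + (yb^-1 + be^-1)); last by rewrite /Z /Z' ebb; ring.
  rewrite -(deg_kpoly (nonconst_poly_neq0 hbs)); apply: deg_addr_lt.
    by rewrite kpoly_eq0 nonconst_poly_neq0.
  apply: deg_leW (deg_leD (deg_leV hyb hybd) (deg_leV hbe hbed)).
  by rewrite deg_kpoly ?nonconst_poly_neq0 //; have := pdeg_ge1 hbs; lia.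
have [|d1 d2] := deg_cfx_mkseqB hr ha hZ hZ' _ hZV hZ'V; first by rewrite -subr_eq0.
by rewrite eal mkseqS -cats1 cfx_cat d2 hZZd hZd hZ'd; split => //; lia.
Qed.

Lemma alpha_other_root be bb yb :
  is_cf (bper_word b) (kval be) -> al = cfx (mkseq a r.+1) be -> be != 0 -> 1 <= deg be ->
  bb = cfx (rev b) bb -> bb = kpoly (bl b s) + yb^-1 -> yb != 0 -> 1 <= deg yb ->
  ~ ls_in_K (kval al) ->
  forall Q, quad_at Q al = 0 -> quad_at Q (cfx (mkseq a r) (kpoly (a r) - bb)) = 0.
Proof.
move=> hbe eal hbe0 hbed hbbfix ebb hyb hybd hirr Q hQ.
have hbeV : deg_le be^-1 0 by apply: deg_le0V; rewrite // (le_trans _ hbed).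
have hbs : (1 < size (bl b s))%N by rewrite bl_nonconst // hs leqnn.
have [hbb0 hbbd] : bb != 0 /\ deg bb = pdeg (bl b s).
  by rewrite ebb; apply: deg_kpoly_addV => //; apply: deg_leW (deg_leV hyb hybd).
have hbbV : deg_le bb^-1 0 by apply: deg_le0V; rewrite ?hbbd.
have [hRbe hRbe'] := period_quad_roots hb (bper_word_fix hbe) hbe0 hbeV hbbfix hbb0 hbbV.
set be' := - bb^-1 in hRbe'; have hbe'0 : be' != 0 by rewrite oppr_eq0 invr_eq0.
have hR : h21 (cf_hmat b) != 0 by apply: cf_hmat21_neq0; rewrite -?size_eq0 -?lt0n.
have [hZ' hZ'd] := conj_tail_deg ebb hyb hybd.
have hZ'V : deg_le (kpoly (a r) - bb)^-1 0 by apply: deg_le0V; rewrite ?hZ'd.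
have hbeh : nonconst (behead (mkseq a r)).
  by case: r hr => // r' _; rewrite mkseq_cons nonconst_mkseq_shift.
have hbeh1 : nonconst (behead (mkseq a r.+1)) by rewrite mkseq_cons nonconst_mkseq_shift.
(* al and the candidate conjugate are the images of be and be' under one homography *)
have [hDM eM] := cfx_hmat hbe0 (fun k hk => cfx_drop_neq0 hbeh1 hbe0 hbeV (andP hk).1).
have hM' k : (0 < k < size (mkseq a r.+1))%N -> cfx (drop k (mkseq a r.+1)) be' != 0.
  move=> /andP [hk0 hkr]; rewrite size_mkseq in hkr.
  rewrite mkseqS drop_rcons ?size_mkseq // -cats1 cfx_cat /= /be' invrN invrK.
  exact: cfx_drop_neq0 hbeh hZ' hZ'V hk0.
have [hDM' eM'] := cfx_hmat hbe'0 hM'.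
have -> : cfx (mkseq a r) (kpoly (a r) - bb) = cfx (mkseq a r.+1) be'.
  by rewrite mkseqS -cats1 cfx_cat /= /be' invrN invrK.
rewrite eM' (quad_root_hmat (R := fix_quad (cf_hmat b)) _ _ hDM hDM' hRbe hRbe') //.
all: by rewrite -eM -eal.
Qed.

Lemma deg_alpha_conj als : galois_conj (kval al) (kval als) ->
  deg (al - als) =
    pdeg (bl b s) - pdeg (a r) - pdeg (a r - bl b s) - 2 * \sum_(1 <= i < r) pdeg (a i).
Proof.
move=> hconj; have hirr := (proj1 (proj2 hconj)).
have [be [hbe eal hbe0 hbed]] := alpha_tail.
have [bb [yb [hbbfix ebb hyb hybd]]] := brev_tail.
have [hne hdeg] := deg_alpha_sub_other eal hbe0 hbed ebb hyb hybd.
have hroot := alpha_other_root hbe eal hbe0 hbed hbbfix ebb hyb hybd hirr.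
by rewrite (galois_conj_unique hconj _ hroot) // eq_sym -subr_eq0.
Qed.

Lemma size_signr n : size ((-1) ^+ n : {poly F}) = 1%N.
Proof. by rewrite -signr_odd; case: (odd n); rewrite ?expr1 ?expr0 ?size_polyN size_poly1. Qed.

Lemma alpha_in_Theta (ta : K) : is_cf (tau_word b) (kval ta) -> in_Theta (kval ta) (kval al).
Proof.
move=> hta; have [be [hbe eal hbe0 hbed]] := alpha_tail.
have hbeV : deg_le be^-1 0 by apply: deg_le0V; rewrite // (le_trans _ hbed).
have eta : ta = be^-1.
  have := is_cf_behead hta; set y := (ta - _)^-1 => -[_ _ hy ->].
  by rewrite /tau_word /= rmorph0 add0r (is_cf_inj (eq_is_cf (frefl _) hy) hbe).
have hbeh1 : nonconst (behead (mkseq a r.+1)) by rewrite mkseq_cons nonconst_mkseq_shift.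
have [hD e] := cfx_hmat hbe0 (fun k hk => cfx_drop_neq0 hbeh1 hbe0 hbeV (andP hk).1).
move: hD e; set M := cf_hmat _ => hD e.
have hD' : kpoly (h22 M) * ta + kpoly (h21 M) != 0.
  by rewrite (_ : _ + _ = ta * hden M be) ?mulf_neq0 ?eta ?invr_neq0 // /hden; field.
exists (kval ta); split; first by left.
exists (h12 M), (h11 M), (h22 M), (h21 M); split; [|split].
- by rewrite -opprB cf_hmat_det size_polyN size_signr.
- move=> h; apply: (negP hD'); apply/eqP/khat_ext => n; exact: (congr1 (fun g => g n) h).
- change (kval al =
          kval ((kpoly (h12 M) * ta + kpoly (h11 M)) / (kpoly (h22 M) * ta + kpoly (h21 M)))).
  congr kval; rewrite eal e; move: hD hD'; rewrite eta /hnum /hden => hD hD'.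
  by field; rewrite hbe0 addrC hD.
Qed.

End AlphaAndItsConjugate.

Lemma first_mismatch (T : eqType) (c d : nat -> T) :
  ~ c =1 d -> exists k, (forall i, (i < k)%N -> c i = d i) /\ c k != d k.
Proof.
move=> hne; have ex : exists k, c k != d k.
  by apply: contrapT => h; apply: hne => k; apply/eqP/negPn/negP => hk; apply: h; exists k.
case: (ex_minnP ex) => k hk hmin; exists k; split => // i hi.
by apply/eqP; apply: contraTT hi => /hmin; rewrite -leqNgt.
Qed.

Lemma sum_split_at (g : nat -> int) r t : (0 < r)%N ->
  \sum_(1 <= i < (r + t).+1) g i = \sum_(1 <= i < r) g i + g r + \sum_(1 <= j < t.+1) g (r + j)%N.
Proof.
move=> hr; rewrite (big_cat_nat (n := r)) //=; last by lia.
rewrite (big_ltn (m := r)) /=; last by lia.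
rewrite addrA -[r.+1]add1n big_addn (_ : ((r + t).+1 - r = t.+1)%N); last by lia.
by congr (_ + _); apply: eq_bigr => i _; rewrite addnC.
Qed.

Section DegreeArithmetic.
Variable F : fieldType.
Implicit Types p q : {poly F}.

Lemma pdeg_sub_ge1 p q : (1 < size p)%N -> (1 < size q)%N ->
  1 <= pdeg p + pdeg q - pdeg (p - q).
Proof.
move=> hp hq; have := size_polyD p (- q); rewrite size_polyN /pdeg.
by move: hp hq; set x := size p; set y := size q; set z := size (p - q); lia.
Qed.

Lemma pdeg_sub_min p q : pdeg p != pdeg q ->
  pdeg p + pdeg q - pdeg (p - q) = Num.min (pdeg p) (pdeg q).
Proof.
rewrite /pdeg minEle => hne.
have [h|h] : (size q < size p)%N \/ (size p < size q)%N.
  by move: hne; set x := size p; set y := size q; lia.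
- rewrite size_polyDl ?size_polyN //.
  by move: h; set x := size p; set y := size q; case: ifP; lia.
- rewrite (addrC p) size_polyDl ?size_polyN //.
  by move: h; set x := size p; set y := size q; case: ifP; lia.
Qed.

End DegreeArithmetic.

Section PeriodIndices.
Variable F : fieldType.
Variable b : seq {poly F}.
Hypothesis hs : (0 < size b)%N.

Lemma bper1 : bper b 1 = bl b 1.
Proof. by rewrite /bper /bl /= mod0n. Qed.

Lemma bper_sprime t : (0 < t)%N -> bper b t.+1 = bl b (sprime (size b) t).
Proof.
case: t => // t _; rewrite /bper /bl /sprime /= -addn1 -modnDml addn1.
case: ifP => h; first by rewrite modn_small.
have := ltn_pmod t hs; rewrite (_ : (t %% size b).+1 = size b) ?modnn //.
by move: h; set u := (t %% size b)%N; lia.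
Qed.

End PeriodIndices.

Section Corollary.
Variable F : fieldType.
Variables (b : seq {poly F}) (tau f alpha alpha_s : LS F) (a : nat -> {poly F}) (r : nat).
Hypotheses (hs : (0 < size b)%N) (htb : ls_bounded tau) (htcf : is_cf (tau_word b) tau)
  (hfb : ls_bounded f) (hfcf : is_cf a f) (hfT : ~ in_Theta tau f)
  (hr : (0 < r)%N) (har : a r != bl b (size b))
  (hab : ls_bounded alpha) (hacf : is_cf (alpha_word a b r) alpha)
  (hgc : galois_conj alpha alpha_s).
Local Notation s := (size b).
Local Notation logrho := (ls_deg (ls_sub alpha alpha_s) - ls_deg (ls_sub f alpha)).
Local Notation follows_period t := (forall j, (1 <= j <= t)%N -> a (r + j)%N = bper b j).

Lemma period_nonconst : nonconst b.
Proof.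
apply/(all_nthP 0) => i hi; have := htcf.1 i.+1 isT.
by rewrite /tau_word /bper /= modn_small.
Qed.

Lemma a_nonconst : cf_nonconst a. Proof. exact: hfcf.1. Qed.

Lemma logrho_formula t : follows_period t -> a (r + t).+1 != bper b t.+1 ->
  logrho = 2 * \sum_(1 <= j < t.+1) pdeg (a (r + j)%N)
           + pdeg (a r) + pdeg (bl b s) - pdeg (a r - bl b s)
           + pdeg (a (r + t).+1) + pdeg (bper b t.+1) - pdeg (a (r + t).+1 - bper b t.+1).
Proof.
move=> hper hne; pose phi := Khat hfb; pose al := Khat hab; pose als := Khat hgc.1.
have hword i : (i <= r + t)%N -> a i = alpha_word a b r i.
  move=> hi; case: (leqP i r) => hir; first by rewrite alpha_word_le.
  have hj : (1 <= i - r <= t)%N by lia.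
  by rewrite /alpha_word leqNgt hir /= -(hper _ hj) subnKC // ltnW.
have hlast : alpha_word a b r (r + t).+1 = bper b t.+1 by rewrite -addnS alpha_word_gt.
have hne' : a (r + t).+1 != alpha_word a b r (r + t).+1 by rewrite hlast.
have [_ hfa] := deg_is_cfB (x := phi) (y := al) hfcf hacf hword hne'; rewrite hlast in hfa.
have hconj := deg_alpha_conj (al := al) (als := als) hs period_nonconst hr a_nonconst har hacf hgc.
have -> : ls_deg (ls_sub alpha alpha_s) = deg (al - als) by [].
have -> : ls_deg (ls_sub f alpha) = deg (phi - al) by [].
by rewrite hconj hfa sum_split_at //; ring.
Qed.

Lemma logrho_first_mismatch : a r.+1 != bl b 1 ->
  logrho = pdeg (a r) + pdeg (bl b s) - pdeg (a r - bl b s)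
           + pdeg (a r.+1) + pdeg (bl b 1) - pdeg (a r.+1 - bl b 1).
Proof.
move=> hne; rewrite (@logrho_formula 0).
- by rewrite big_geq // mulr0 add0r addn0 bper1.
- by case=> [|j].
- by rewrite addn0 bper1.
Qed.

Lemma follows_period_pos t : a r.+1 = bl b 1 -> a (r + t).+1 != bper b t.+1 -> (0 < t)%N.
Proof. by case: t => // h1; rewrite addn0 h1 bper1 eqxx. Qed.

Lemma logrho_later_mismatch t : a r.+1 = bl b 1 -> follows_period t ->
  a (r + t).+1 != bper b t.+1 ->
  logrho = 2 * \sum_(1 <= j < t.+1) pdeg (a (r + j)%N)
           + pdeg (a r) + pdeg (bl b s) - pdeg (a r - bl b s)
           + pdeg (a (r + t).+1) + pdeg (bl b (sprime s t))
           - pdeg (a (r + t).+1 - bl b (sprime s t)).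
Proof.
move=> h1 hper hne; rewrite -bper_sprime ?(follows_period_pos h1 hne) //.
exact: logrho_formula.
Qed.

Lemma exists_mismatch : exists t, follows_period t /\ a (r + t).+1 != bper b t.+1.
Proof.
have [|k [hagree hk]] := first_mismatch (c := a) (d := alpha_word a b r).
  move=> h; apply: hfT; have hfa : is_cf a alpha by apply: eq_is_cf hacf => i; rewrite h.
  rewrite (funext (is_cf_unique hfcf hfa)).
  exact: (alpha_in_Theta (al := Khat hab) (ta := Khat htb) hs period_nonconst a_nonconst hacf htcf).
have hrk : (r < k)%N by rewrite ltnNge; apply: contra hk => /alpha_word_le ->.
have ek : k = (r + (k.-1 - r)).+1 by lia.
exists (k.-1 - r)%N; split => [j hj|].
  by case: j hj => // j hj; rewrite hagree ?alpha_word_gt //; lia.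
by rewrite -ek; have := alpha_word_gt a b r (k.-1 - r); rewrite addnS -ek => <-.
Qed.

Lemma logrho_ge2 : 2 <= logrho.
Proof.
have hbs : (1 < size (bl b s))%N by rewrite bl_nonconst ?period_nonconst // hs leqnn.
have har1 := pdeg_sub_ge1 (a_nonconst hr) hbs.
have [t [hper hne]] := exists_mismatch; rewrite (logrho_formula hper hne).
have hbt := pdeg_sub_ge1 (a_nonconst (ltn0Sn (r + t))) (bper_nonconst hs period_nonconst t.+1).
have hsum : 0 <= \sum_(1 <= j < t.+1) pdeg (a (r + j)%N).
  by apply: sumr_ge0 => j _; apply: pdeg_ge0.
lia.
Qed.

Lemma logrho_min t s' :
  ((a r.+1 != bl b 1 /\ t = 0%N /\ s' = 1%N) \/
   (a r.+1 = bl b 1 /\ follows_period t /\ a (r + t).+1 != bper b t.+1 /\ s' = sprime s t)) ->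
  pdeg (a r) != pdeg (bl b s) -> pdeg (a (r + t).+1) != pdeg (bl b s') ->
  logrho = 2 * (\sum_(1 <= j < t.+1) pdeg (a (r + j)%N))
           + Num.min (pdeg (a r)) (pdeg (bl b s))
           + Num.min (pdeg (a (r + t).+1)) (pdeg (bl b s')).
Proof.
move=> [[h1 [-> ->]]|[h1 [h2 [h3 ->]]]] hd1 hd2.
  rewrite addn0 in hd2 *; rewrite logrho_first_mismatch // big_geq // mulr0 add0r.
  by rewrite -(pdeg_sub_min hd1) -(pdeg_sub_min hd2); ring.
by rewrite (logrho_later_mismatch h1 h2 h3) -(pdeg_sub_min hd1) -(pdeg_sub_min hd2); ring.
Qed.

End Corollary.

Unset Implicit Arguments.
Set Strict Implicit.
Set Printing Implicit Defensive.

Theorem corollary2p4 (F : finFieldType) (b : seq {poly F}) (tau : LS F)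
    (a : nat -> {poly F}) (f : LS F) (r : nat) (alpha alpha_s : LS F) :
  (* tau = [0; overline(b_1, ..., b_s)], shortest period b_1 ... b_s *)
  (0 < size b)%N ->
  (forall d : nat, (0 < d < size b)%N -> exists j : nat, bper b j.+1 != bper b (j.+1 + d)) ->
  ls_bounded tau -> is_cf (tau_word b) tau ->
  (* f = [a_0; a_1, ...] in Khat \ (K u Theta_tau) *)
  ls_bounded f -> is_cf a f -> ~ ls_in_K f -> ~ in_Theta tau f ->
  (* r > 0, a_r <> b_s *)
  (0 < r)%N -> a r != bl b (size b) ->
  (* alpha_r = [a_0; a_1, ..., a_r, overline(b_1, ..., b_s)], alpha_s = alpha_r^sigma *)
  ls_bounded alpha -> is_cf (alpha_word a b r) alpha -> galois_conj alpha alpha_s ->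
  let L := ls_deg (ls_sub alpha alpha_s) - ls_deg (ls_sub f alpha) in  (* = - log_q rho_r *)
  let s := size b in
  (* (i) *)
  (a r.+1 != bl b 1 ->
     L = pdeg (a r) + pdeg (bl b s) - pdeg (a r - bl b s)
         + pdeg (a r.+1) + pdeg (bl b 1) - pdeg (a r.+1 - bl b 1)) /\
  (* (ii) *)
  (forall t : nat, a r.+1 = bl b 1 ->
     (forall j : nat, (1 <= j <= t)%N -> a (r + j)%N = bper b j) ->
     a (r + t).+1 != bper b t.+1 ->
     L = 2 * (\sum_(1 <= j < t.+1) pdeg (a (r + j)%N))
         + pdeg (a r) + pdeg (bl b s) - pdeg (a r - bl b s)
         + pdeg (a (r + t).+1) + pdeg (bl b (sprime s t))
         - pdeg (a (r + t).+1 - bl b (sprime s t))) /\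
  (* in particular rho_r <= q^-2 *)
  2 <= L /\
  (* final statement, with t = 0 and s' = 1 when a_{r+1} <> b_1 *)
  (forall t s' : nat,
     ((a r.+1 != bl b 1 /\ t = 0%N /\ s' = 1%N) \/
      (a r.+1 = bl b 1 /\ (forall j : nat, (1 <= j <= t)%N -> a (r + j)%N = bper b j) /\
       a (r + t).+1 != bper b t.+1 /\ s' = sprime s t)) ->
     pdeg (a r) != pdeg (bl b s) ->
     pdeg (a (r + t).+1) != pdeg (bl b s') ->
     L = 2 * (\sum_(1 <= j < t.+1) pdeg (a (r + j)%N))
         + Num.min (pdeg (a r)) (pdeg (bl b s))
         + Num.min (pdeg (a (r + t).+1)) (pdeg (bl b s'))).
Proof.
move=> hs _ htb htcf hfb hfcf _ hfT hr har hab hacf hgc L s.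
split; first exact: (logrho_first_mismatch hs htcf hfb hfcf hr har hab hacf hgc).
split; first exact: (logrho_later_mismatch hs htcf hfb hfcf hr har hab hacf hgc).
split; first exact: (logrho_ge2 hs htb htcf hfb hfcf hfT hr har hab hacf hgc).
exact: (logrho_min hs htcf hfb hfcf hr har hab hacf hgc).
Qed.
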